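(* Let $P$ be a non-trivial classifier on $\mathbb{R}^n$ (i.e. its label set $L_P$ has more than one element) with infinite pointwise coverage. Then $P$ is a refined linear classifier.
   Context: A classifier is a partition $P$ of $\mathbb{R}^n$ together with a distinguished member $R \in P$, the refinement set, which may be empty and which is both meagre and Lebesgue null. The label set is $L_P = P \setminus \{R\}$ and the feature space is $\bigcup L_P$. $P$ is trivial if $L_P$ is a singleton and non-trivial otherwise. For $x \in \mathbb{R}^n$, $P(x)$ denotes the member of $P$ containing $x$. An anchor for $x$ is an open ball $A = B(c,r)$ with $x \in A \subseteq P(x)$; its coverage is $r$. The coverage of $P$ at $x$ is $C_P(x) = \sup\{ r : B(c,r) \text{ is an anchor for } x\}$ ($0$ if no anchor exists, $\infty$ if anchors of arbitrarily large radius exist). $P$ has infinite pointwise coverage if $C_P(x) = \infty$ for every $x$ in the feature space. A refined linear classifier is a classifier $P = \{M, N, R\}$ with $L_P = \{M, N\}$, where $R$ is an affine hyperplane and $M, N$ are the two open halfspaces on either side of $R$. *)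

From HB Require Import structures.
From mathcomp Require Import all_boot all_order all_algebra.
From mathcomp Require Import all_classical all_reals.
From mathcomp Require Import ereal topology normedtype.
Set Implicit Arguments. Unset Strict Implicit. Unset Printing Implicit Defensive.
Import Order.TTheory GRing.Theory Num.Theory.
Import numFieldNormedType.Exports.
Local Open Scope classical_set_scope.
Local Open Scope ring_scope.

Section Defs.
Variables (R : realType) (n : nat).
Local Notation V := 'rV[R]_n.

Definition edist (x y : V) : R := Num.sqrt (\sum_(i < n) (x ord0 i - y ord0 i) ^+ 2).
Definition eball (c : V) (r : R) : set V := [set x | edist x c < r].

Definition nowhere_dense (A : set V) : Prop := interior (closure A) = set0.
Definition meagre (A : set V) : Prop :=
  exists F : nat -> set V, (forall k, nowhere_dense (F k)) /\ A `<=` \bigcup_k F k.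

Definition box (lo hi : V) : set V := [set x | forall i, lo ord0 i <= x ord0 i <= hi ord0 i].
Definition box_vol (lo hi : V) : R := \prod_(i < n) Num.max 0 (hi ord0 i - lo ord0 i).
Definition lebesgue_null (A : set V) : Prop :=
  forall eps : R, 0 < eps -> exists lo hi : nat -> V,
    A `<=` \bigcup_k box (lo k) (hi k) /\
    forall N, \sum_(k < N) box_vol (lo k) (hi k) <= eps.

(* A classifier: a partition P of R^n with distinguished member Rf (the
   refinement set, possibly empty) which is meagre and Lebesgue null. *)
Definition is_classifier (P : set (set V)) (Rf : set V) : Prop :=
  [/\ P Rf,
      (forall A, P A -> A <> Rf -> A !=set0),
      (forall A B, P A -> P B -> A <> B -> A `&` B = set0),
      (forall x : V, exists A, P A /\ A x) &
      (meagre Rf /\ lebesgue_null Rf)].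

Definition labels (P : set (set V)) (Rf : set V) : set (set V) := P `\ Rf.

Definition nontrivial (P : set (set V)) (Rf : set V) : Prop :=
  exists A B, labels P Rf A /\ labels P Rf B /\ A <> B.

Definition feature_space (P : set (set V)) (Rf : set V) : set V :=
  \bigcup_(A in labels P Rf) A.

Definition is_anchor (P : set (set V)) (x c : V) (r : R) : Prop :=
  x \in eball c r /\ exists A, [/\ P A, A x & eball c r `<=` A].

Definition coverage (P : set (set V)) (x : V) : \bar R :=
  ereal_sup ([set (r%:E)%E | r in [set r | exists c, is_anchor P x c r]] `|` [set 0%E]).

Definition infinite_pointwise_coverage (P : set (set V)) (Rf : set V) : Prop :=
  forall x, feature_space P Rf x -> coverage P x = (+oo)%E.

Definition dotv (a x : V) : R := \sum_(i < n) a ord0 i * x ord0 i.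
Definition refined_linear (P : set (set V)) (Rf : set V) : Prop :=
  is_classifier P Rf /\
  exists (a : V) (b : R), a != 0 /\
    Rf = [set x | dotv a x = b] /\
    P = [set Rf; [set x | dotv a x < b]; [set x | dotv a x > b]].

End Defs.

(* Infinite coverage makes every label L open, and around each point x of L it
   puts an open half-space into L with x on its boundary: the anchors
   B(c_k, r_k) of x with r_k -> oo, rescaled about x by 1/r_k, have centres
   accumulating at some w, and they exhaust {y | w.(y - x) > 0}, or all of R^n
   if w = 0, which a non-trivial classifier forbids.  Two labels contain
   disjoint open half-spaces, which forces opposite normals; hence there are
   exactly two labels, {u.y > a} and {u.y < b}.  The slab between them lies in
   the refinement set, which is meagre, so by Baire's theorem it is empty and
   a = b. *)

From Pilot Require Import Defs.
From HB Require Import structures.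
From mathcomp Require Import all_boot all_order all_algebra.
From mathcomp Require Import all_classical all_reals.
From mathcomp Require Import ereal topology normedtype sequences realfun.
From mathcomp Require Import ring lra.
Set Implicit Arguments. Unset Strict Implicit. Unset Printing Implicit Defensive.
Import Order.TTheory GRing.Theory Num.Theory.
Import numFieldNormedType.Exports.
Local Open Scope classical_set_scope.
Local Open Scope ring_scope.

Section DotProduct.
Variables (R : realType) (n : nat).
Local Notation V := 'rV[R]_n.
Implicit Types (u v w x y : V).

Lemma dotvC u v : dotv u v = dotv v u.
Proof. by apply: eq_bigr => i _; rewrite mulrC. Qed.

Lemma dotvDr u x y : dotv u (x + y) = dotv u x + dotv u y.
Proof. by rewrite /dotv -big_split; apply: eq_bigr => i _; rewrite !mxE mulrDr. Qed.

Lemma dotvNr u x : dotv u (- x) = - dotv u x.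
Proof. by rewrite /dotv -sumrN; apply: eq_bigr => i _; rewrite !mxE mulrN. Qed.

Lemma dotvZr u k x : dotv u (k *: x) = k * dotv u x.
Proof. by rewrite /dotv mulr_sumr; apply: eq_bigr => i _; rewrite !mxE mulrCA. Qed.

Lemma dotvBr u x y : dotv u (x - y) = dotv u x - dotv u y.
Proof. by rewrite dotvDr dotvNr. Qed.

Lemma dotvNl u x : dotv (- x) u = - dotv x u.
Proof. by rewrite dotvC dotvNr dotvC. Qed.

Lemma dotvZl u k x : dotv (k *: x) u = k * dotv x u.
Proof. by rewrite dotvC dotvZr dotvC. Qed.

Lemma dotvBl u x y : dotv (x - y) u = dotv x u - dotv y u.
Proof. by rewrite dotvC dotvBr !(dotvC u). Qed.

Lemma dotv_ge0 u : 0 <= dotv u u.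
Proof. by apply: sumr_ge0 => i _; rewrite -expr2 sqr_ge0. Qed.

Lemma sqr_coord_le_dotv u i : u ord0 i ^+ 2 <= dotv u u.
Proof.
rewrite /dotv (bigD1 i) //= -expr2 lerDl.
by apply: sumr_ge0 => j _; rewrite -expr2 sqr_ge0.
Qed.

Lemma dotv_gt0 u : u != 0 -> 0 < dotv u u.
Proof.
move=> u0; rewrite lt_neqAle dotv_ge0 andbT eq_sym; apply: contra u0 => /eqP uu0.
apply/eqP/matrixP => i j; rewrite (ord1 i) mxE; apply/eqP.
by rewrite -sqrf_eq0 eq_le sqr_ge0 andbT -uu0 sqr_coord_le_dotv.
Qed.

Lemma norm_dotv_le u v (d : R) : (forall i, `|v ord0 i| <= d) ->
  `|dotv u v| <= (\sum_i `|u ord0 i|) * d.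
Proof.
move=> vd; rewrite /dotv mulr_suml; apply: le_trans (ler_norm_sum _ _ _) _.
by apply: ler_sum => i _; rewrite normrM ler_wpM2l.
Qed.

Lemma dotv_onto u (m : R) : u != 0 -> exists y, dotv u y = m.
Proof.
by move=> /dotv_gt0 u0; exists ((m / dotv u u) *: u); rewrite dotvZr mulfVK ?gt_eqF.
Qed.

Lemma edist_lt x (c : V) (r : R) :
  Defs.edist x c < r <-> 0 < r /\ dotv (x - c) (x - c) < r ^+ 2.
Proof.
have sumE : \sum_(i < n) (x ord0 i - c ord0 i) ^+ 2 = dotv (x - c) (x - c).
  by apply: eq_bigr => i _; rewrite !mxE expr2.
rewrite /Defs.edist sumE; split=> [xc | [r0 xc]].
  have r0 : 0 < r by apply: le_lt_trans xc; exact: sqrtr_ge0.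
  by split => //; rewrite -ltr_sqrt ?exprn_gt0 // sqrtr_sqr gtr0_norm.
by rewrite -(gtr0_norm r0) -sqrtr_sqr ltr_sqrt ?exprn_gt0.
Qed.

Lemma continuous_dotv u : continuous (dotv u).
Proof.
apply: continuous_big => [|i _]; first exact: add_continuous.
by move=> y; apply: continuousM; [exact: cst_continuous | exact: coord_continuous].
Qed.

Lemma continuous_edist (c : V) : continuous (fun x => Defs.edist x c).
Proof.
move=> x; apply: (@continuous_comp _ _ _
  (fun x : V => \sum_(i < n) (x ord0 i - c ord0 i) ^+ 2) Num.sqrt);
  last exact: sqrt_continuous.
apply: continuous_big => [|i _ y]; first exact: add_continuous.
apply: (@continuous_comp _ _ _ (fun y : V => y ord0 i - c ord0 i) (fun t => t ^+ 2));
  last exact: exprn_continuous.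
by apply: (@continuousB _ _ _ (fun y : V => y ord0 i));
  [exact: coord_continuous | exact: cst_continuous].
Qed.

Lemma open_eball (c : V) (r : R) : open (eball c r).
Proof. exact (open_comp (fun x _ => @continuous_edist c x) (@open_lt _ r)). Qed.

Lemma open_slab u (a b : R) : open [set y | a < dotv u y < b].
Proof. exact (open_comp (fun y _ => @continuous_dotv u y) (@itv_open _ R a b)). Qed.

End DotProduct.

Section Topology.
Variables (R : realType) (n : nat).
Local Notation V := 'rV[R]_n.

Lemma open_ray (S : set V) (y v : V) : open S -> S y ->
  exists2 e : R, 0 < e & S (y + e *: v).
Proof.
move=> oS Sy.
have line : (fun e : R => y + e *: v) @ 0 --> y.
  rewrite -[X in _ --> X]addr0 -(scale0r v).
  by apply: cvgD; [exact: cvg_cst | exact: scalel_continuous].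
have /nbhs_ballP [e e0 sub] := line S (open_nbhs_nbhs (conj oS Sy)).
exists (e / 2); first by rewrite divr_gt0.
apply: sub; rewrite -ball_normE /= sub0r normrN gtr0_norm ?divr_gt0 //.
by rewrite ltr_pdivrMr // ltr_pMr // ltr1n.
Qed.

Lemma bounded_cluster (f : nat -> V) (b : R) :
  (forall k i, `|f k ord0 i| <= b) -> exists w, cluster (f @ \oo) w.
Proof.
move=> fb.
have := @rV_compact R n (fun=> `[- b, b]%classic) (fun=> @segment_compact R _ _).
move=> /(_ (f @ \oo) _ _) [|w [_ clw]]; last by exists w.
by exists 0%N => // k _ i; rewrite /= in_itv /= -ler_norml.
Qed.

Lemma cluster_rV_frequently (f : nat -> V) w : cluster (f @ \oo) w ->
  forall (d : R) N, 0 < d ->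
  exists2 k, (N <= k)%N & forall i, `|f k ord0 i - w ord0 i| < d.
Proof.
move=> clw d N d0.
have [|_ [[k Nk <-] [_ fkw]]] :=
  clw (f @` [set k | (N <= k)%N]) (ball w d) _ (nbhsx_ballx w d d0).
  by apply: filterS (nbhs_infty_ge N) => k Nk; exists k.
by exists k => // i; move: (fkw ord0 i); rewrite -ball_normE /= distrC.
Qed.

(* The library does not infer the completeNormedModType structure of ['rV[R]_n]
   that [Baire] needs. *)
HB.instance Definition _ := Uniform_isComplete.Build V cauchy_cvg.

Lemma meagre_open_sub0 (S O : set V) : meagre S -> open O -> O `<=` S ->
  O = set0.
Proof.
move=> [F [ndF SF]] oO OS; apply/eqP/negPn/negP => /set0P [y0 Oy0].
have odF k : open (~` closure (F k)) /\ dense (~` closure (F k)).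
  split; first exact/closed_openC/closed_closure.
  move=> U [z Uz] oU; apply/set0P/negP => /eqP UF.
  suff : (closure (F k))° z by rewrite (ndF k).
  apply: filterS (open_nbhs_nbhs (conj oU Uz)) => x Ux; apply: contrapT => nFx.
  by have : (U `&` ~` closure (F k)) x by []; rewrite UF.
have [y [Oy Fy]] := @Baire R V _ odF O (ex_intro _ y0 Oy0) oO.
have [k _ Fky] := SF y (OS y Oy).
exact: Fy k I (subset_closure Fky).
Qed.

End Topology.

Section Halfspaces.
Variables (R : realType) (n : nat).
Local Notation V := 'rV[R]_n.

Lemma pslope_unbounded (a b c : R) : 0 < a -> exists2 t, 0 < t & c < b + t * a.
Proof.
move=> a0; exists (`|c - b| / a + 1).
  by have := divr_ge0 (normr_ge0 (c - b)) (ltW a0); lra.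
by rewrite mulrDl mulfVK ?gt_eqF // mul1r; have := ler_norm (c - b); lra.
Qed.

(* [g] is [u.u] times the component of [w] orthogonal to [u]; if it is nonzero,
   [w] is unbounded on the ray [u + t g] of the half-space. *)
Lemma dotv_ub_halfspace (u w : V) (c : R) : u != 0 ->
  (forall y, 0 < dotv u y -> dotv w y <= c) -> exists2 mu, mu <= 0 & w = mu *: u.
Proof.
move=> u0 wc; have uu0 := dotv_gt0 u0.
pose g := dotv u u *: w - dotv u w *: u.
have ug : dotv u g = 0 by rewrite dotvBr !dotvZr mulrC subrr.
have g0 : g = 0.
  apply: contraTeq isT => /dotv_gt0 gg.
  have gw : 0 < dotv w g.
    by move: gg; rewrite {1}/g dotvBl !dotvZl ug mulr0 subr0 pmulr_rgt0.
  have [t t0 ct] := pslope_unbounded (dotv w u) c gw.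
  have := wc (u + t *: g); rewrite dotvDr dotvZr ug mulr0 addr0 dotvDr dotvZr.
  by move=> /(_ uu0); lra.
have wE : w = (dotv u w / dotv u u) *: u.
  move/eqP: g0; rewrite subr_eq0 => /eqP uuw.
  apply: (@scalerI _ _ (dotv u u)); first by rewrite gt_eqF.
  by rewrite uuw scalerA mulrCA mulfV ?gt_eqF ?mulr1.
exists (dotv u w / dotv u u) => //; rewrite leNgt; apply/negP => mu0.
have [t t0 ct] := pslope_unbounded 0 c (mulr_gt0 mu0 uu0).
have := wc (t *: u); rewrite !dotvZr {1}wE dotvZl.
by move=> /(_ (mulr_gt0 t0 uu0)); lra.
Qed.

Lemma disjoint_halfspaces (u w p z : V) : u != 0 -> w != 0 ->
  (forall y, 0 < dotv u (y - p) -> 0 < dotv w (y - z) -> False) ->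
  forall y, dotv u y < dotv u z -> 0 < dotv w (y - z).
Proof.
move=> u0 w0 disj.
have [mu mu_le0 wE] : exists2 mu, mu <= 0 & w = mu *: u.
  apply: (@dotv_ub_halfspace _ _ (dotv w (z - p)) u0) => y uy.
  rewrite leNgt; apply/negP => wy; apply: (disj (y + p)); first by rewrite addrK.
  by move: wy; rewrite !dotvBr dotvDr; lra.
have mu_lt0 : mu < 0.
  rewrite lt_neqAle mu_le0 andbT; apply: contra_neq w0 => mu0.
  by rewrite wE mu0 scale0r.
by move=> y yz; rewrite wE dotvZl dotvBr; nra.
Qed.

Lemma open_upclosed_halfspace (S : set V) (u : V) : u != 0 -> open S ->
  S !=set0 -> has_lbound (dotv u @` S) ->
  (forall a y, S a -> dotv u a < dotv u y -> S y) ->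
  exists al, S = [set y | al < dotv u y].
Proof.
move=> u0 oS S0 lbS upS; exists (inf (dotv u @` S)).
apply/seteqP; split => y /= => [Sy | infy].
  have [e e0 Sy'] := open_ray (- u) oS Sy.
  have := ge_inf lbS (ex_intro2 _ _ _ Sy' erefl).
  rewrite dotvDr dotvZr dotvNr; have := dotv_gt0 u0; nra.
have infS : has_inf (dotv u @` S).
  by split => //; have [s Ss] := S0; exists (dotv u s), s.
have eps0 : 0 < dotv u y - inf (dotv u @` S) by rewrite subr_gt0.
have [_ [a Sa <-] ay] := inf_adherent eps0 infS.
by apply: upS Sa _; lra.
Qed.

End Halfspaces.

Section AnchorLimit.
Variables (R : realType) (n : nat).
Local Notation V := 'rV[R]_n.
Variables (L : set V) (x : V) (c : nat -> V) (r : nat -> R).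
Hypotheses (r_gt : forall k, k%:R < r k)
  (x_in : forall k, Defs.edist x (c k) < r k)
  (ball_sub : forall k, eball (c k) (r k) `<=` L).

Let r_gt0 k : 0 < r k.
Proof. exact: le_lt_trans (ler0n _ k) (r_gt k). Qed.

Definition anchor_dir k : V := (r k)^-1 *: (c k - x).
Local Notation dir := anchor_dir.

Let dir_dotv_lt1 k : dotv (dir k) (dir k) < 1.
Proof.
have /edist_lt [_] := x_in k; rewrite -opprB dotvNl dotvNr opprK => ck.
rewrite /anchor_dir dotvZl dotvZr mulrA -expr2 exprVn mulrC.
by rewrite ltr_pdivrMr ?exprn_gt0 ?mul1r.
Qed.

Let dir_entry_le1 k i : `|dir k ord0 i| <= 1.
Proof.
have := le_lt_trans (sqr_coord_le_dotv _ i) (dir_dotv_lt1 k).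
by rewrite ler_norml; move: (dir k ord0 i) => a a1; apply/andP; split; nra.
Qed.

Let anchor_mem y k :
  dotv (y - x) (y - x) + r k ^+ 2 * dotv (dir k) (dir k) <
    2 * r k * dotv (y - x) (dir k) + r k ^+ 2 -> L y.
Proof.
move=> ineq; apply: (@ball_sub k y); apply/edist_lt; split; first exact: r_gt0.
have -> : y - c k = (y - x) - r k *: dir k.
  by rewrite /anchor_dir scalerA mulfV ?gt_eqF // scale1r opprB addrA subrK.
move: ineq; move: (y - x) (dir k) => v d ineq.
by rewrite dotvBl !dotvBr !dotvZl !dotvZr (dotvC d); move: ineq; rewrite expr2; lra.
Qed.

Let dir_near w : cluster (dir @ \oo) w -> forall (d M : R), 0 < d ->
  exists k, M < r k /\ forall i, `|dir k ord0 i - w ord0 i| < d.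
Proof.
move=> clw d M d0.
have [k Mk dirw] := cluster_rV_frequently clw (Num.truncn M).+1 d0.
exists k; split => //; apply: lt_trans (r_gt k).
by apply: lt_le_trans (truncnS_gt M) _; rewrite ler_nat.
Qed.

Let anchor_halfspace w : cluster (dir @ \oo) w ->
  forall y, 0 < dotv w (y - x) -> L y.
Proof.
move=> clw y; set v := y - x; set a := dotv w v => a0.
set s := \sum_i `|v ord0 i|; have s0 : 0 <= s by apply: sumr_ge0.
have d0 : 0 < a / (2 * (s + 1)) by apply: divr_gt0; lra.
have [k [rk dirw]] := dir_near clw (2 * dotv v v / a) d0.
apply: (anchor_mem (k := k)).
have close : `|dotv v (dir k - w)| <= s * (a / (2 * (s + 1))).
  by apply: norm_dotv_le => i; rewrite [X in `|X|]mxE [X in _ + X]mxE; exact: ltW.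
have close' : s * (a / (2 * (s + 1))) <= a / 2.
  rewrite mulrA ler_pdivrMr; last lra.
  by rewrite mulrAC ler_pdivlMr //; nra.
have va : a / 2 <= dotv v (dir k).
  move: close; rewrite dotvBr (dotvC v w) -/a ler_norml; lra.
have vv : 2 * dotv v v < r k * a by rewrite -ltr_pdivrMr.
have := dir_dotv_lt1 k; have := dotv_ge0 v; have := r_gt0 k.
move: (dotv (dir k) (dir k)) => q r0 vv0 q1; nra.
Qed.

Let anchor_everywhere : cluster (dir @ \oo) 0 -> forall y, L y.
Proof.
move=> cl0 y; set v := y - x.
set s := \sum_i `|v ord0 i|; have s0 : 0 <= s by apply: sumr_ge0.
have n0 : 0 <= n%:R :> R by [].
pose d := (2 * (s + n%:R + 1))^-1.
have d0 : 0 < d by rewrite invr_gt0; lra.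
have dd : d * (2 * (s + n%:R + 1)) = 1 by rewrite mulVf // gt_eqF //; lra.
have [k [rk dir0]] := dir_near cl0 (dotv v v + 2) d0.
have dir_le i : `|dir k ord0 i| <= d.
  by move: (dir0 i); rewrite [X in _ - X]mxE subr0 => /ltW.
have sd : s * d <= 1 / 2 by have := mulr_ge0 n0 (ltW d0); lra.
have nd : n%:R * d <= 1 / 2 by have := mulr_ge0 s0 (ltW d0); lra.
have t_lb : - (1 / 2) <= dotv v (dir k).
  by have := norm_dotv_le v dir_le; rewrite ler_norml -/s => /andP [+ _]; lra.
have q_ub : dotv (dir k) (dir k) <= 1 / 4.
  have sum_le : \sum_i `|dir k ord0 i| <= n%:R * d.
    apply: le_trans (ler_sum _ (fun i _ => dir_le i)) _.
    by rewrite sumr_const card_ord mulr_natl.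
  apply: le_trans (ler_normlW (norm_dotv_le (dir k) dir_le)) _.
  apply: le_trans (ler_wpM2r (ltW d0) sum_le) _.
  have := mulr_ge0 n0 (ltW d0); have := mulr_ge0 s0 (ltW d0); nra.
apply: (anchor_mem (k := k)); have := dotv_ge0 v; have := r_gt0 k.
move: (dotv v v) (dotv v (dir k)) (dotv (dir k) (dir k)) rk t_lb q_ub.
move=> vv t q rk t_lb q_ub r0 vv0.
have p1 : 0 <= r k * (t + 1 / 2) by apply: mulr_ge0; lra.
have p2 : 0 <= r k ^+ 2 * (1 / 4 - q) by apply: mulr_ge0; [exact: sqr_ge0 | lra].
have p3 : 0 < r k * (r k - vv - 2) by apply: mulr_gt0; lra.
nra.
Qed.

Lemma anchor_limit_halfspace : (exists z, ~ L z) ->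
  exists2 w : V, w != 0 & forall y, 0 < dotv w (y - x) -> L y.
Proof.
move=> [z Lz]; have [w clw] := bounded_cluster dir_entry_le1.
exists w; last exact: anchor_halfspace.
by apply: contra_notN Lz => /eqP w0; apply: anchor_everywhere; rewrite -w0.
Qed.

End AnchorLimit.

Section Classifier.
Variables (R : realType) (n : nat).
Local Notation V := 'rV[R]_n.
Variables (P : set (set V)) (Rf : set V).
Hypotheses (hP : is_classifier P Rf) (hcov : infinite_pointwise_coverage P Rf)
  (hnt : nontrivial P Rf).

Lemma labels_eq L1 L2 y : labels P Rf L1 -> labels P Rf L2 -> L1 y -> L2 y ->
  L1 = L2.
Proof.
case: hP => _ _ disj _ _ [P1 _] [P2 _] y1 y2; apply: contrapT => ne.
by have : (L1 `&` L2) y by []; rewrite disj.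
Qed.

Lemma label_notin_Rf L y : labels P Rf L -> L y -> ~ Rf y.
Proof.
case: hP => PRf _ disj _ _ [PL LRf] Ly Rfy.
by have : (L `&` Rf) y by []; rewrite disj.
Qed.

Lemma label_neq0 L : labels P Rf L -> L !=set0.
Proof. by case: hP => _ nonempty _ _ _ [PL LRf]; exact: nonempty. Qed.

Lemma label_anchors L x : labels P Rf L -> L x -> forall M : R,
  exists c r, M < r /\ Defs.edist x c < r /\ eball c r `<=` L.
Proof.
move=> LL Lx M; apply: contrapT => noanchor.
have : (coverage P x <= (Num.max M 0)%:E)%E.
  apply: ge_ereal_sup => _ [[r [c [xin [A [PA Ax sub]]]] <-]|->]; last first.
    by rewrite lee_fin le_max lexx orbT.
  rewrite lee_fin le_max leNgt; apply/orP; left; apply/negP => Mr.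
  apply: noanchor; exists c, r; split => //; split; first by rewrite inE in xin.
  suff <- : A = L by [].
  apply: (labels_eq (conj PA _) LL Ax Lx) => ARf.
  by apply: (label_notin_Rf LL Lx); rewrite -ARf.
by rewrite hcov ?leNgt ?ltey //; exists L.
Qed.

Lemma open_label L : labels P Rf L -> open L.
Proof.
move=> LL; rewrite openE => x Lx; have [c [r [_ [xin sub]]]] := label_anchors LL Lx 0.
by apply: filterS sub _; apply: open_nbhs_nbhs; split => //; exact: open_eball.
Qed.

Lemma label_proper L : labels P Rf L -> exists z, ~ L z.
Proof.
case: hnt => [A [B [LA [LB AB]]]] LL.
have [-> | /eqP LA'] := eqVneq L A.
  have [z Bz] := label_neq0 LB.
  by exists z => Az; exact: AB (labels_eq LA LB Az Bz).
have [z Az] := label_neq0 LA.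
by exists z => Lz; exact: LA' (labels_eq LL LA Lz Az).
Qed.

Lemma label_halfspace L x : labels P Rf L -> L x ->
  exists2 w : V, w != 0 & forall y, 0 < dotv w (y - x) -> L y.
Proof.
move=> LL Lx; have /choice [cr anchor] : forall k : nat, exists cr : V * R,
    k%:R < cr.2 /\ Defs.edist x cr.1 < cr.2 /\ eball cr.1 cr.2 `<=` L.
  by move=> k; have [c [r anc]] := label_anchors LL Lx k%:R; exists (c, r).
apply: (@anchor_limit_halfspace _ _ L x (fst \o cr) (snd \o cr)).
- by move=> k; have [] := anchor k.
- by move=> k; have [_ []] := anchor k.
- by move=> k; have [_ []] := anchor k.
- exact: label_proper.
Qed.

Section TwoLabels.
Variables (A B : set V) (p u : V).
Hypotheses (LA : labels P Rf A) (LB : labels P Rf B) (AB : A <> B) (u0 : u != 0)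
  (HA : forall y, 0 < dotv u (y - p) -> A y).

Let BA : B <> A. Proof. exact: nesym AB. Qed.

Lemma label_below C z y : labels P Rf C -> C <> A -> C z ->
  dotv u y < dotv u z -> C y.
Proof.
move=> LC CA Cz yz; have [w w0 HC] := label_halfspace LC Cz.
apply: (HC y); apply: (disjoint_halfspaces (p := p) u0 w0 _ yz) => y' A' C'.
exact: CA (labels_eq LC LA (HC _ C') (HA A')).
Qed.

Lemma label_above a y : A a -> dotv u a < dotv u y -> A y.
Proof.
move=> Aa ay; have [w w0 HAa] := label_halfspace LA Aa; have [q Bq] := label_neq0 LB.
apply: (HAa y); apply: (@disjoint_halfspaces _ _ (- u) w q a).
- by rewrite oppr_eq0.
- exact: w0.
- move=> y' B' A'; apply: AB; apply: (labels_eq LA LB (HAa _ A')).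
  by apply: (label_below LB BA Bq); move: B'; rewrite dotvNl dotvBr; lra.
- by rewrite !dotvNl ltrN2.
Qed.

Lemma labels_AB C : labels P Rf C -> C = A \/ C = B.
Proof.
move=> LC; have [-> | CA] := pselect (C = A); [by left | right].
have [z Cz] := label_neq0 LC; have [q Bq] := label_neq0 LB.
have [y uy] := dotv_onto (Num.min (dotv u z) (dotv u q) - 1) u0.
have m1 : Num.min (dotv u z) (dotv u q) <= dotv u z by rewrite ge_min lexx.
have m2 : Num.min (dotv u z) (dotv u q) <= dotv u q by rewrite ge_min lexx orbT.
apply: (labels_eq (y := y) LC LB);
  [apply: (label_below LC CA Cz) | apply: (label_below LB BA Bq)]; rewrite uy; lra.
Qed.

Lemma label_sep a b : A a -> B b -> dotv u b <= dotv u a.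
Proof.
move=> Aa Bb; rewrite leNgt; apply/negP => ab.
have [y uy] := dotv_onto ((dotv u a + dotv u b) / 2) u0.
apply: AB; apply: (labels_eq (y := y) LA LB);
  [apply: (label_above Aa) | apply: (label_below LB BA Bb)]; rewrite uy; lra.
Qed.

Lemma label_above_halfspace : exists al, A = [set y | al < dotv u y].
Proof.
apply: (open_upclosed_halfspace u0 (open_label LA) (label_neq0 LA) _ label_above).
by have [q Bq] := label_neq0 LB; exists (dotv u q) => _ [a Aa <-]; exact: label_sep.
Qed.

Lemma label_below_halfspace : exists be, B = [set y | dotv u y < be].
Proof.
have [al BE] : exists al, B = [set y | al < dotv (- u) y].
  apply: (open_upclosed_halfspace _ (open_label LB) (label_neq0 LB)).
  - by rewrite oppr_eq0.
  - have [a Aa] := label_neq0 LA.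
    by exists (- dotv u a) => _ [b Bb <-]; rewrite dotvNl lerN2 label_sep.
  - by move=> b y Bb; rewrite !dotvNl ltrN2; exact: (label_below LB BA Bb).
by exists (- al); rewrite BE; apply/seteqP; split => y; rewrite /= dotvNl ltrNr.
Qed.

Lemma labels_cover y : [\/ Rf y, A y | B y].
Proof.
have [_ _ _ cover _] := hP; have [X [PX Xy]] := cover y.
have [<- | XRf] := pselect (X = Rf); first exact: Or31.
by case: (labels_AB (conj PX XRf)) => XE; rewrite -XE; [apply: Or32 | apply: Or33].
Qed.

Lemma label_levels_eq al be :
  A = [set y | al < dotv u y] -> B = [set y | dotv u y < be] -> al = be.
Proof.
move=> AE BE; have [_ _ _ _ [meagre_Rf _]] := hP.
apply/eqP; rewrite eq_le; apply/andP; split; rewrite leNgt; apply/negP => lt;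
  have [y uy] := dotv_onto ((al + be) / 2) u0.
  have slab_Rf : [set y | be < dotv u y < al] `<=` Rf.
    move=> y' /andP [by' y'a]; case: (labels_cover y') => //; rewrite ?AE ?BE /=; lra.
  have := meagre_open_sub0 meagre_Rf (@open_slab _ _ u be al) slab_Rf.
  by move=> /eqP; apply/negP/set0P; exists y; rewrite /= uy; apply/andP; lra.
by apply: AB; apply: (labels_eq (y := y) LA LB); rewrite ?AE ?BE /= uy; lra.
Qed.

Lemma refined_linear_two_labels : refined_linear P Rf.
Proof.
have [al AE] := label_above_halfspace; have [be BE] := label_below_halfspace.
have al_be := label_levels_eq AE BE; subst be.
have RfE : Rf = [set y | dotv u y = al].
  apply/seteqP; split => y /= => [Rfy | uy].
    apply/eqP; rewrite eq_le !leNgt; apply/andP; split; apply/negP => h.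
      by apply: (label_notin_Rf LA (y := y)); rewrite // AE.
    by apply: (label_notin_Rf LB (y := y)); rewrite // BE.
  by case: (labels_cover y) => //; rewrite ?AE ?BE /= uy ltxx.
split => //; exists u, al; do 2 split => //.
apply/seteqP; split => X.
  move=> PX; have [-> | XRf] := pselect (X = Rf); first by left; left.
  case: (labels_AB (conj PX XRf)) => ->; first by right; rewrite AE.
  by left; right; rewrite BE.
by move=> [[->|->]|->]; [case: hP | rewrite -BE; exact: LB.1 | rewrite -AE; exact: LA.1].
Qed.

End TwoLabels.

End Classifier.

Theorem theorem3 (R : realType) (n : nat) (P : set (set 'rV[R]_n)) (Rf : set 'rV[R]_n) :
  is_classifier P Rf -> nontrivial P Rf -> infinite_pointwise_coverage P Rf ->
  refined_linear P Rf.
Proof.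
move=> hP hnt hcov; have [A [B [LA [LB AB]]]] := hnt.
have [p Ap] := label_neq0 hP LA.
have [u u0 HA] := label_halfspace hP hcov hnt LA Ap.
exact: (refined_linear_two_labels hP hcov hnt LA LB AB u0 HA).
Qed.
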